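(* For a regular Hausdorff space $X$ the following are equivalent: (1) $X$ has a $\sigma$-locally countable base; (2) $\mathcal{K}(X)$ has a $\sigma$-locally countable weak base; (3) $\mathcal{K}(X)$ has a $\sigma$-locally countable base.
   Context: $\mathcal{K}(X)$ is the set of nonempty compact subsets of $X$ with the Vietoris topology (base: $\langle U_1,\dots,U_k\rangle=\{K: K\subset\bigcup_i U_i,\ K\cap U_j\neq\emptyset\ \forall j\}$, $U_i$ open in $X$). A weak base for $Y$ is a cover $\mathcal{P}=\bigcup_{y\in Y}\mathcal{P}_y$ such that: for $U,V\in\mathcal{P}_y$ there is $W\in\mathcal{P}_y$ with $W\subset U\cap V$; each member of $\mathcal{P}_y$ contains $y$, and for each open $U\ni y$ some $P\in\mathcal{P}_y$ has $P\subset U$; and $G\subset Y$ is open whenever for each $y\in G$ some $P\in\mathcal{P}_y$ has $P\subset G$. A family is locally countable if each point has a neighborhood meeting only countably many members; $\sigma$-locally countable means a countable union of locally countable families. *)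

From HB Require Import structures.
From mathcomp Require Import all_boot all_order all_algebra.
From mathcomp Require Import all_classical all_reals all_analysis.
Set Implicit Arguments. Unset Strict Implicit. Unset Printing Implicit Defensive.
Local Open Scope classical_set_scope.

Section GenericTop.
Variables (T : Type) (op : set T -> Prop).

Definition locally_countable (F : set (set T)) : Prop :=
  forall x : T, exists U : set T, op U /\ U x /\
    countable [set P | F P /\ P `&` U !=set0].

Definition sigma_locally_countable (F : set (set T)) : Prop :=
  exists G : nat -> set (set T),
    (forall n, locally_countable (G n)) /\ F = \bigcup_n G n.

Definition is_base (B : set (set T)) : Prop :=
  (forall U, B U -> op U) /\
  (forall (U : set T) (x : T), op U -> U x ->
     exists V, B V /\ V x /\ V `<=` U).

Definition is_weak_base (P : T -> set (set T)) : Prop :=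
  (forall y U V, P y U -> P y V -> exists W, P y W /\ W `<=` U `&` V) /\
  (forall y W, P y W -> W y) /\
  (forall (U : set T) y, op U -> U y -> exists W, P y W /\ W `<=` U) /\
  (forall G : set T, (forall y, G y -> exists W, P y W /\ W `<=` G) -> op G).

Definition weak_base_family (P : T -> set (set T)) : set (set T) :=
  [set W | exists y, P y W].

Definition has_sigma_lc_base : Prop :=
  exists B, is_base B /\ sigma_locally_countable B.

Definition has_sigma_lc_weak_base : Prop :=
  exists P, is_weak_base P /\ sigma_locally_countable (weak_base_family P).

End GenericTop.

Definition hyperspace (X : topologicalType) : Type :=
  {K : set X | K !=set0 /\ compact K}.

Definition vietoris_basic (X : topologicalType) (s : seq (set X))
  : set (hyperspace X) :=
  [set K | (proj1_sig K `<=` \bigcup_(U in [set U | U \in s]) U) /\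
           (forall U, U \in s -> proj1_sig K `&` U !=set0)].

Definition vietoris_open (X : topologicalType) (A : set (hyperspace X)) : Prop :=
  forall K, A K -> exists s : seq (set X),
    (forall U, U \in s -> open U) /\ vietoris_basic s K /\ vietoris_basic s `<=` A.

From mathcomp Require Import all_boot all_order all_algebra.
From mathcomp Require Import all_classical all_reals all_analysis.
Set Implicit Arguments. Unset Strict Implicit. Unset Printing Implicit Defensive.
Local Open Scope classical_set_scope.

(* (1) => (3): the Vietoris sets <U_1, ..., U_k> whose U_i lie in the first n
   layers of a sigma-locally countable base of X form a locally countable
   family, since a compact set has a neighbourhood meeting only countably many
   members of a layer.  (3) => (2) holds because every base is a weak base.
   (2) => (1): a sigma-locally countable weak base P of K(X) is countable at
   each point, hence refines to a sequence there.  Testing P at compact sets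
   D u {b} approached by the sets D u {a_k}, where a_k --> b, shows through
   x |-> {x} that X is sequential and, by a diagonal argument using regularity,
   Frechet-Urysohn.  So [set x | W {x}] is a neighbourhood of y whenever W is
   in P {y}, and the interiors of these sets form the required base of X. *)

Lemma filter_forall_seq (T : Type) (F : set_system T) (I : eqType) (s : seq I)
    (A : I -> set T) :
  Filter F -> (forall i, i \in s -> F (A i)) ->
  F [set x | forall i, i \in s -> A i x].
Proof.
move=> FF; elim: s => [|i s IHs] Fs.
  by apply: filterS filterT => x _ i; rewrite in_nil.
apply: filterS (filterI (Fs i (mem_head i s)) (IHs _)).
  by move=> x [Aix Asx] j; rewrite inE => /orP [/eqP ->|/Asx].
by move=> j js; apply: Fs; rewrite inE js orbT.
Qed.

Lemma cvg_openP {X : topologicalType} {a : nat -> X} {x : X} :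
  a @ \oo --> x <-> forall U, open U -> U x -> \forall k \near \oo, U (a k).
Proof.
split=> [ax U oU Ux|aU A]; first by apply: ax; exact: open_nbhs_nbhs.
by rewrite nbhsE => -[U [oU Ux] UA]; apply: filterS (aU U oU Ux) => k /UA.
Qed.

Section WeakBase.
Variables (T : Type) (op : set T -> Prop) (P : T -> set (set T)).
Hypothesis wbP : is_weak_base op P.

Lemma weak_base_meets y (S : set T) : ~ S y ->
  (forall U, op U -> U y -> U `&` S !=set0) ->
  (forall x, x <> y -> ~ S x -> exists2 U, op U & U x /\ U `&` S = set0) ->
  forall W, P y W -> W `&` S !=set0.
Proof.
have [_ [_ [Pnbhs Popen]]] := wbP.
move=> nSy Sadh Ssep W PW; apply: contrapT => WS0.
(* Otherwise W witnesses at y that ~` S is open. *)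
suff [z [nSz Sz]] : ~` S `&` S !=set0 by [].
apply: Sadh nSy; apply: Popen => x nSx.
have [->|xy] := pselect (x = y).
  by exists W; split => // z Wz Sz; apply: WS0; exists z.
have [U oU [Ux US0]] := Ssep x xy nSx.
have [W' [PW' W'U]] := Pnbhs U x oU Ux.
by exists W'; split => // z /W'U Uz Sz; rewrite -[False]/(set0 z) -US0.
Qed.

Lemma weak_base_eventually y (R : nat -> T) :
  (forall U, op U -> U y -> \forall k \near \oo, U (R k)) ->
  (forall (I : set nat) x, x <> y -> (forall k, I k -> x <> R k) ->
     exists2 U, op U & U x /\ forall k, I k -> ~ U (R k)) ->
  forall W, P y W -> \forall k \near \oo, W (R k).
Proof.
move=> Rcvg Rsep W PW; apply: contrapT => nevW.
pose I := [set k | ~ W (R k)].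
suff [z [Wz [k Ik Rkz]]] : W `&` (R @` I) !=set0 by apply: Ik; rewrite Rkz.
apply: (weak_base_meets _ _ _ PW).
- by move=> [k Ik Rky]; apply: Ik; rewrite Rky; exact: wbP.2.1 _ _ PW.
- move=> U oU Uy; apply: contrapT => UI0; apply: nevW.
  apply: filterS (Rcvg U oU Uy) => k URk; apply: contrapT => nWRk.
  by apply: UI0; exists (R k); split => //; exists k.
- move=> x xy nIx; have [U oU [Ux UI]] : exists2 U, op U & U x /\
      forall k, I k -> ~ U (R k).
    by apply: Rsep xy _ => k Ik xRk; apply: nIx; exists k.
  exists U => //; split => //; rewrite -subset0 => z [Uz [k Ik Rkz]].
  by apply: (UI k Ik); rewrite Rkz.
Qed.

Lemma weak_base_countable y :
  sigma_locally_countable op (weak_base_family P) -> countable (P y).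
Proof.
move=> [G [lcG PG]]; have [U hU] := choice (fun n => lcG n y).
apply: (@sub_countable _ _ _ (\bigcup_n [set Q | G n Q /\ Q `&` U n !=set0])).
  apply: subset_card_le => W PW.
  have : weak_base_family P W by exists y.
  rewrite PG => -[n _ GnW]; exists n => //; split => //.
  by exists y; split; [exact: wbP.2.1 _ _ PW | exact: (hU n).2.1].
by apply: bigcup_countable => // n _; exact: (hU n).2.2.
Qed.

Lemma weak_base_cvg_seq y : op setT -> countable (P y) ->
  exists2 Q : nat -> set T, (forall n, P y (Q n)) &
    forall U, op U -> U y -> \forall n \near \oo, Q n `<=` U.
Proof.
move=> opT /countable_injP [f finj].
have [Pmeet [_ [Pnbhs _]]] := wbP.
have Qex n : exists Q, P y Q /\ forall W, P y W -> (f W < n)%N -> Q `<=` W.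
  elim: n => [|n [Q [PQ Qsub]]].
    by have [W [PW _]] := Pnbhs setT y opT I; exists W.
  have [[W' [PW' fW']]|nofW] := pselect (exists W', P y W' /\ f W' = n).
    have [Q' [PQ' Q'sub]] := Pmeet _ _ _ PQ PW'.
    exists Q'; split => // W PW; rewrite ltnS leq_eqVlt => /orP [/eqP fW|fWn].
      have -> : W = W' by apply: finj; rewrite ?inE ?fW ?fW'.
      by move=> x /Q'sub [].
    by move=> x /Q'sub [/(Qsub W PW fWn)].
  exists Q; split => // W PW; rewrite ltnS leq_eqVlt => /orP [/eqP fW|]; last exact: Qsub.
  by exfalso; apply: nofW; exists W.
have [Q hQ] := choice Qex; exists Q => [n|U oU Uy]; first exact: (hQ n).1.
have [W [PW WU]] := Pnbhs U y oU Uy.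
by exists (f W).+1 => // n /= fWn; apply: subset_trans WU; exact: (hQ n).2.
Qed.

End WeakBase.

Lemma countableU (T : Type) (A B : set T) :
  countable A -> countable B -> countable (A `|` B).
Proof.
move=> cA cB; rewrite -bigcup2inE.
apply: bigcup_countable; first exact/finite_set_countable/finite_II.
by move=> [|[|i]] //= _; exact: finite_set_countable.
Qed.

Section LocallyCountable.
Variables (T : Type) (op : set T -> Prop).

Lemma locally_countableS (F G : set (set T)) :
  G `<=` F -> locally_countable op F -> locally_countable op G.
Proof.
move=> GF lcF x; have [U [oU [Ux cU]]] := lcF x; exists U; split => //; split => //.
by apply: sub_countable cU; apply: subset_card_le => W [/GF].
Qed.

Lemma sigma_locally_countableS (F G : set (set T)) :
  G `<=` F -> sigma_locally_countable op F -> sigma_locally_countable op G.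
Proof.
move=> GF [H [lcH FH]]; exists (fun n => H n `&` G); split.
  by move=> n; apply: locally_countableS (lcH n); exact: subIsetl.
by rewrite -setI_bigcupl -FH; apply/esym/setIidr.
Qed.

Lemma locally_countableU (F G : set (set T)) :
  (forall U V, op U -> op V -> op (U `&` V)) ->
  locally_countable op F -> locally_countable op G ->
  locally_countable op (F `|` G).
Proof.
move=> opI lcF lcG x.
have [U [oU [Ux cU]]] := lcF x; have [V [oV [Vx cV]]] := lcG x.
exists (U `&` V); split; first exact: opI.
split => //; apply: sub_countable (countableU cU cV); apply: subset_card_le.
by move=> W [[FW|GW] [z [Wz [Uz Vz]]]]; [left|right]; split => //; exists z.
Qed.

Lemma locally_countable_layers (G : nat -> set (set T)) :
  (forall U V, op U -> op V -> op (U `&` V)) ->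
  (forall n, locally_countable op (G n)) ->
  forall n, locally_countable op [set U | exists2 m, (m <= n)%N & G m U].
Proof.
move=> opI lcG; elim=> [|n IHn].
  apply: locally_countableS (lcG 0) => U [m]; rewrite leqn0 => /eqP -> //.
apply: locally_countableS (locally_countableU opI IHn (lcG n.+1)) => U [m].
by rewrite leq_eqVlt => /orP [/eqP -> GU|mn GU]; [right|left; exists m].
Qed.

Lemma sigma_locally_countable_image (S : Type) (opS : set S -> Prop)
    (f : S -> T) (g : set T -> set S) (F : set (set T)) :
  (forall U, op U -> opS (f @^-1` U)) -> (forall W, g W `<=` f @^-1` W) ->
  sigma_locally_countable op F -> sigma_locally_countable opS (g @` F).
Proof.
move=> fcont gsub [G [lcG ->]]; exists (fun n => g @` G n); split; last first.
  by rewrite image_bigcup.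
move=> n x; have [U [oU [Ufx cU]]] := lcG n (f x).
exists (f @^-1` U); split; first exact: fcont.
split => //.
have cgU := sub_countable (card_image_le g [set W | G n W /\ W `&` U !=set0]) cU.
apply: sub_countable cgU; apply: subset_card_le.
move=> _ [[W GW <-] [z [/gsub Wfz Ufz]]]; exists W => //; split => //.
by exists (f z).
Qed.

End LocallyCountable.

Lemma base_weak_base (T : Type) (op : set T -> Prop) (B : set (set T)) :
  (forall U V, op U -> op V -> op (U `&` V)) ->
  (forall G, (forall y, G y -> exists2 U, op U & U y /\ U `<=` G) -> op G) ->
  is_base op B -> is_weak_base op (fun y => [set W | B W /\ W y]).
Proof.
move=> opI oplocal [opB Bnbhs]; split.
  move=> y U V [BU Uy] [BV Vy].
  have [W [BW [Wy WUV]]] := Bnbhs _ y (opI _ _ (opB U BU) (opB V BV)) (conj Uy Vy).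
  by exists W.
split; first by move=> y W [].
split; first by move=> U y oU Uy; have [W [BW [Wy WU]]] := Bnbhs U y oU Uy; exists W.
move=> G Gnbhs; apply: oplocal => y /Gnbhs [W [[BW Wy] WG]].
by exists W => //; exact: opB.
Qed.

Section Hyperspace.
Variable X : topologicalType.
Implicit Types (U V : set X) (K L : hyperspace X).

Definition hit U : set (hyperspace X) := [set K | proj1_sig K `&` U !=set0].
Definition inside U : set (hyperspace X) := [set K | proj1_sig K `<=` U].

Lemma hyperspace_eq K L : proj1_sig K = proj1_sig L -> K = L.
Proof. by case: K L => [A pA] [B pB] /= AB; exact: eq_exist. Qed.

Lemma vietoris_basic_open (s : seq (set X)) :
  (forall U, U \in s -> open U) -> vietoris_open (vietoris_basic s).
Proof. by move=> os K sK; exists s; split => //; split. Qed.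

Lemma vietoris_open_local (A : set (hyperspace X)) :
  (forall K, A K -> exists2 W, vietoris_open W & W K /\ W `<=` A) ->
  vietoris_open A.
Proof.
move=> Alocal K /Alocal [W oW [WK WA]]; have [s [os [sK sW]]] := oW K WK.
by exists s; split => //; split => //; exact: subset_trans WA.
Qed.

Lemma vietoris_basic1 U : vietoris_basic [:: U] = inside U.
Proof.
apply/seteqP; split => K.
  by move=> [KU _] x /KU [V]; rewrite /= inE => /eqP ->.
move=> KU; split; first by move=> x /KU Ux; exists U => //=; rewrite inE.
move=> V; rewrite inE => /eqP ->; have [x Kx] := (proj2_sig K).1.
by exists x; split => //; exact: KU.
Qed.

Lemma vietoris_basic_hit U : vietoris_basic [:: setT; U] = hit U.
Proof.
apply/seteqP; split => K.
  by move=> [_ /(_ U)]; apply; rewrite !inE eqxx orbT.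
move=> KU; split; first by move=> x _; exists setT => //=; rewrite inE eqxx.
move=> V; rewrite !inE => /orP [/eqP ->|/eqP -> //].
by have [x Kx] := (proj2_sig K).1; exists x.
Qed.

Lemma open_inside U : open U -> vietoris_open (inside U).
Proof. by move=> oU; rewrite -vietoris_basic1; apply: vietoris_basic_open => V; rewrite inE => /eqP ->. Qed.

Lemma open_hit U : open U -> vietoris_open (hit U).
Proof.
move=> oU; rewrite -vietoris_basic_hit; apply: vietoris_basic_open => V.
by rewrite !inE => /orP [/eqP ->|/eqP ->] //; exact: openT.
Qed.

Lemma vietoris_openT : vietoris_open (@setT (hyperspace X)).
Proof.
rewrite -(_ : inside setT = setT); first exact/open_inside/openT.
by apply/seteqP; split.
Qed.

Lemma vietoris_openI (A B : set (hyperspace X)) :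
  vietoris_open A -> vietoris_open B -> vietoris_open (A `&` B).
Proof.
move=> oA oB K [AK BK].
have [s [os [[Ks Kms] sA]]] := oA _ AK.
have [t [ot [[Kt Kmt] tB]]] := oB _ BK.
pose cup (r : seq (set X)) := \bigcup_(U in [set U | U \in r]) U.
have ocup r : (forall U, U \in r -> open U) -> open (cup r).
  by move=> or; apply: bigcup_open => U /or.
pose r := [seq V `&` cup t | V <- s] ++ [seq W `&` cup s | W <- t].
have rP U : U \in r -> (exists2 V, V \in s & U = V `&` cup t) \/
                       (exists2 W, W \in t & U = W `&` cup s).
  by rewrite mem_cat => /orP [/mapP [V Vs ->]|/mapP [W Wt ->]];
    [left | right]; [exists V | exists W].
have rs V : V \in s -> V `&` cup t \in r.
  by move=> Vs; rewrite mem_cat; apply/orP; left; apply/mapP; exists V.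
have rt W : W \in t -> W `&` cup s \in r.
  by move=> Wt; rewrite mem_cat; apply/orP; right; apply/mapP; exists W.
exists r; split.
  by move=> U /rP [[V Vs ->]|[W Wt ->]]; apply: openI; auto.
split; first split.
- move=> x Kx; have [V Vs Vx] := Ks x Kx.
  by exists (V `&` cup t); [exact: rs | split => //; exact: Kt].
- move=> U /rP [[V Vs ->]|[W Wt ->]].
    by have [z [Kz Vz]] := Kms V Vs; exists z; split => //; split => //; exact: Kt.
  by have [z [Kz Wz]] := Kmt W Wt; exists z; split => //; split => //; exact: Ks.
- move=> L [Lr Lm]; split; [apply: sA | apply: tB]; split.
  + by move=> x /Lr [U /rP [[V Vs ->]|[W Wt ->]]] [] //; exists V.
  + by move=> V /rs /Lm [z [Lz [Vz _]]]; exists z.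
  + by move=> x /Lr [U /rP [[V Vs ->]|[W Wt ->]]] [] //; exists W.
  + by move=> W /rt /Lm [z [Lz [Wz _]]]; exists z.
Qed.

Definition hset1 (x : X) : hyperspace X :=
  exist _ [set x] (conj (ex_intro (fun y => [set x] y) x erefl) (@compact_set1 X x)).

Lemma open_hset1_preimage (A : set (hyperspace X)) :
  vietoris_open A -> open (hset1 @^-1` A).
Proof.
move=> oA; rewrite openE => x /oA [s [os [[cover meet] sA]]].
have sx U : U \in s -> U x by move=> /meet [_ [/= -> ]].
have nbhs_s U : U \in s -> nbhs x U.
  by move=> Us; apply: open_nbhs_nbhs; split; [exact: os | exact: sx].
apply: filterS (filter_forall_seq _ nbhs_s) => y sy; apply: sA; split.
  by move=> _ /= ->; have [U Us _] := cover x erefl; exists U => //; exact: sy.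
by move=> U Us; exists y; split => //; exact: sy.
Qed.

End Hyperspace.
Arguments hset1 {X}.

Section HausdorffHyperspace.
Variables (X : topologicalType) (hX : hausdorff_space X).

Lemma hausdorff_open_sep (x y : X) : x <> y ->
  exists U V, [/\ open U, open V, U x, V y & U `&` V = set0].
Proof.
move=> xy; move: hX; rewrite open_hausdorff => /(_ x y) [].
  exact/eqP.
by case=> U V /=; rewrite !inE => -[xU yV] [oU oV UV]; exists U, V; split.
Qed.

Lemma closed_set1 (x : X) : closed [set x].
Proof. exact/accessible_closed_set1/hausdorff_accessible. Qed.

Lemma vietoris_sep_two_points (D : set X) (K : hyperspace X) p q :
  closed D -> proj1_sig K p -> proj1_sig K q -> ~ D p -> ~ D q -> p <> q ->
  exists2 W, vietoris_open W &
    W K /\ forall L x, proj1_sig L = D `|` [set x] -> ~ W L.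
Proof.
move=> cD Kp Kq nDp nDq pq.
have [U [V [oU oV Up Vq UV]]] := hausdorff_open_sep pq.
exists (hit (U `&` ~` D) `&` hit (V `&` ~` D)).
  by apply: vietoris_openI; apply: open_hit; apply: openI => //; exact: closed_openC.
split; first by split; [exists p | exists q].
move=> L x Ldef [[u [Lu [Uu nDu]]] [v [Lv [Vv nDv]]]].
rewrite Ldef in Lu Lv; case: Lu => [//|/= eu]; case: Lv => [//|/= ev]; subst u v.
by rewrite -[False]/(set0 x) -UV.
Qed.

Lemma vietoris_open_nonsingleton :
  vietoris_open [set K : hyperspace X | forall x, proj1_sig K <> [set x]].
Proof.
apply: vietoris_open_local => K nsK; have [p Kp] := (proj2_sig K).1.
have [q [Kq qp]] : exists q, proj1_sig K q /\ q <> p.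
  apply: contrapT => nq; apply: (nsK p); apply/seteqP; split => [x Kx|x ->] //.
  by apply: contrapT => xp; apply: nq; exists x.
have [W oW [WK Wns]] := vietoris_sep_two_points closed0 Kq Kp id id qp.
by exists W => //; split => // L WL x Lx; apply: (Wns L x) WL; rewrite Lx set0U.
Qed.

Lemma cvg_open_avoid (a : nat -> X) b p (I : set nat) :
  a @ \oo --> b -> p <> b -> (forall k, I k -> p <> a k) ->
  exists2 U, open U & U p /\ forall k, I k -> ~ U (a k).
Proof.
move=> a_cvg pb pa; have [U [V [oU oV Up Vb UV]]] := hausdorff_open_sep pb.
have [N _ aV] := cvg_openP.1 a_cvg V oV Vb.
pose F := a @` [set k | (k < N)%N /\ I k].
have cF : closed F.
  apply: (accessible_finite_set_closed.1 (hausdorff_accessible hX)).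
  by apply/finite_image/(sub_finite_set _ (finite_II N)) => k [].
exists (U `&` ~` F); first exact/openI/closed_openC.
split; first by split => // -[k [_ Ik] akp]; exact: pa k Ik (esym akp).
move=> k Ik [Uak nFak]; case: (ltnP k N) => kN; first by apply: nFak; exists k.
by rewrite -[False]/(set0 (a k)) -UV; split => //; exact: aV.
Qed.

Section Adjoin.
Variables (D : set X) (b : X) (a : nat -> X).
Variables (C : hyperspace X) (R : nat -> hyperspace X).
Hypotheses (a_cvg : a @ \oo --> b) (C_def : proj1_sig C = D `|` [set b])
  (R_def : forall k, proj1_sig (R k) = D `|` [set a k]).

Lemma vietoris_cvg_adjoin (U : set (hyperspace X)) :
  vietoris_open U -> U C -> \forall k \near \oo, U (R k).
Proof.
move=> oU UC; have [s [os [[Cs Cm] sU]]] := oU C UC.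
rewrite C_def in Cs Cm; have [V Vs Vb] := Cs b (or_intror erefl).
have s_ev : \forall k \near \oo, forall W, W \in s -> W b -> W (a k).
  apply: filter_forall_seq => W Ws; have [Wb|nWb] := pselect (W b).
    by apply: filterS (cvg_openP.1 a_cvg W (os W Ws) Wb) => k ? _.
  by apply: filterS filterT => k _ /nWb.
apply: filterS s_ev => k sak; apply: sU; split.
  move=> x; rewrite R_def => -[Dx|->]; first by apply: Cs; left.
  by exists V => //; exact: sak.
move=> W Ws; have [w [[Dw|->] Ww]] := Cm W Ws.
  by exists w; rewrite R_def; split => //; left.
by exists (a k); rewrite R_def; split; [right | exact: sak].
Qed.

Hypotheses (D_closed : closed D) (bD : D b \/ D = set0).

Lemma vietoris_sep_adjoin (I : set nat) (K : hyperspace X) :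
  K <> C -> (forall k, I k -> K <> R k) ->
  exists2 U, vietoris_open U & U K /\ forall k, I k -> ~ U (R k).
Proof.
move=> KC KR.
(* Either K misses a point of D, or K = D, or K has two points off D, or
   K = D u [set p] for a single point p off D. *)
have [[p [Dp nKp]]|DK] := pselect (exists p, D p /\ ~ proj1_sig K p).
  exists (inside (~` [set p])); first exact/open_inside/closed_openC/closed_set1.
  split; first by move=> x Kx xp; apply: nKp; rewrite -xp.
  by move=> k _ /(_ p); rewrite R_def; apply => //; left.
have {}DK : D `<=` proj1_sig K.
  by move=> x Dx; apply: contrapT => nKx; apply: DK; exists x.
have [[p [Kp nDp]]|KD] := pselect (exists p, proj1_sig K p /\ ~ D p); last first.
  have K_def : proj1_sig K = D.
    apply/seteqP; split => [x Kx|//].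
    by apply: contrapT => nDx; apply: KD; exists x.
  exfalso; case: bD => [Db|D0]; last by have [y] := (proj2_sig K).1; rewrite K_def D0.
  apply: KC; apply: hyperspace_eq; rewrite K_def C_def.
  by apply/seteqP; split => [x|x [|->]]; [left| |].
have [[q [Kq [nDq qp]]]|Kp_only] :=
  pselect (exists q, proj1_sig K q /\ ~ D q /\ q <> p).
  have [W oW [WK WR]] := vietoris_sep_two_points D_closed Kq Kp nDq nDp qp.
  by exists W => //; split => // k _; exact: WR.
have K_def : proj1_sig K = D `|` [set p].
  apply/seteqP; split => [x Kx|x [/DK //|-> //]].
  have [Dx|nDx] := pselect (D x); [by left | right].
  by apply: contrapT => xp; apply: Kp_only; exists x.
have pb : p <> b.
  by move=> pb; apply: KC; apply: hyperspace_eq; rewrite K_def C_def pb.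
have pNa k : I k -> p <> a k.
  by move=> Ik pa; apply: (KR k Ik); apply: hyperspace_eq; rewrite K_def R_def pa.
have [Op oOp [Opp Opa]] := cvg_open_avoid a_cvg pb pNa.
exists (hit (Op `&` ~` D)); first exact/open_hit/openI/closed_openC.
split; first by exists p; rewrite K_def; split; [right|].
by move=> k Ik [x]; rewrite R_def => -[[Dx|->] [Opak nDx]] //; exact: Opa k Ik Opak.
Qed.

Lemma weak_base_cvg_adjoin (P : hyperspace X -> set (set (hyperspace X))) :
  is_weak_base (@vietoris_open X) P -> forall W, P C W -> \forall k \near \oo, W (R k).
Proof.
move=> wbP; apply: (weak_base_eventually wbP) => [U oU UC|I K KC KR].
  exact: vietoris_cvg_adjoin.
exact: vietoris_sep_adjoin.
Qed.

End Adjoin.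
End HausdorffHyperspace.

Lemma compact_cvg_range (X : topologicalType) (b : nat -> X) (z : X) :
  b @ \oo --> z -> compact ([set z] `|` range b).
Proof.
move=> b_cvg F PF FA.
have [cz|ncz] := pselect (cluster F z); first by exists z; split => //; left.
have [B [N [FB [zN BN]]]] : exists B N, F B /\ nbhs z N /\ ~ (B `&` N !=set0).
  apply: contrapT => nBN; apply: ncz => B N FB zN; apply: contrapT => BN0.
  by apply: nBN; exists B, N.
have [N0 _ bN] := b_cvg N zN.
have F_init : F [set b k | k in `I_N0].
  apply: filterS (filterI FB FA) => x [Bx [/= xz|[k _ bkx]]].
    by exfalso; apply: BN; exists x; split => //; rewrite xz; exact: nbhs_singleton.
  case: (ltnP k N0) => kN0; first by exists k.
  by exfalso; apply: BN; exists x; split => //; rewrite -bkx; exact: bN.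
have [x [[k _ bkx] clx]] := finite_compact (finite_image b (finite_II N0)) PF F_init.
by exists x; split => //; right; exists k.
Qed.

Definition seq_closure (X : topologicalType) (A : set X) : set X :=
  [set x | exists2 a : nat -> X, (forall n, A (a n)) & a @ \oo --> x].

Lemma subset_seq_closure (X : topologicalType) (A : set X) : A `<=` seq_closure A.
Proof. by move=> x Ax; exists (fun=> x) => //; exact: cvg_cst. Qed.

Lemma cvg_hset1_seq (X : topologicalType) (x : X) (Q : nat -> set (hyperspace X))
    (s : nat -> X) :
  (forall U, vietoris_open U -> U (hset1 x) -> \forall n \near \oo, Q n `<=` U) ->
  (forall n, Q n (hset1 (s n))) -> s @ \oo --> x.
Proof.
move=> Qcvg Qs; apply/cvg_openP => U oU Ux.
apply: filterS (Qcvg _ (open_inside oU) _) => [n QU|_ ->//].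
exact: QU _ (Qs n) (s n) erefl.
Qed.

Lemma regular_nbhs_closure_avoid (X : topologicalType) (x z : X) :
  hausdorff_space X -> regular_space X -> x <> z ->
  exists V, [/\ open V, V x & ~ closure V z].
Proof.
move=> hX hR xz.
have [U [V [oU oV Ux zV UV]]] := (regular_openP x).1 (hR x) [set z] (@closed_set1 X hX z) xz.
exists U; split => // /(_ V (open_nbhs_nbhs (conj oV (zV z erefl)))) [w [Uw Vw]].
by rewrite -[False]/(set0 w) -UV.
Qed.

Section WeakBaseHyperspace.
Variables (X : topologicalType) (hX : hausdorff_space X) (hR : regular_space X).
Variable P : hyperspace X -> set (set (hyperspace X)).
Hypotheses (wbP : is_weak_base (@vietoris_open X) P)
  (cntP : forall K, countable (P K)).

Lemma weak_base_hset1_cvg (a : nat -> X) y W :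
  a @ \oo --> y -> P (hset1 y) W -> \forall k \near \oo, W (hset1 (a k)).
Proof.
move=> a_cvg; apply: (@weak_base_cvg_adjoin X hX set0 y a (hset1 y)
  (fun k => hset1 (a k)) a_cvg _ _ closed0 (or_intror erefl) P wbP) => [|k];
  by rewrite /= set0U.
Qed.

Lemma weak_base_sequential (S : set X) :
  (forall a x, (forall n, S (a n)) -> a @ \oo --> x -> S x) -> closed S.
Proof.
move=> Sseq; rewrite -openC.
pose G := [set K : hyperspace X | forall x, proj1_sig K = [set x] -> ~ S x].
suff oG : vietoris_open G.
  rewrite (_ : ~` S = hset1 @^-1` G); first exact: open_hset1_preimage.
  apply/seteqP; split => [x nSx y xy|x Gx]; last exact: Gx x erefl.
  by have <- : x = y by rewrite -[x = y]/([set y] x) -xy.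
apply: wbP.2.2.2 => K GK.
have [[x Kx]|nsK] := pselect (exists x, proj1_sig K = [set x]); last first.
  have nsK' x : proj1_sig K <> [set x] by move=> Kx; apply: nsK; exists x.
  have [W [PW WN]] := wbP.2.2.1 _ K (vietoris_open_nonsingleton hX) nsK'.
  by exists W; split => // L /WN nsL x /nsL.
have Kh : K = hset1 x by exact: hyperspace_eq.
subst K; have [Q PQ Qcvg] := weak_base_cvg_seq wbP (@vietoris_openT X) (cntP (hset1 x)).
suff [n QG] : exists n, Q n `<=` G by exists (Q n).
(* Otherwise each Q n contains some [set s n] with S (s n), and s --> x. *)
apply: contrapT => QnG.
have Qs n : exists s, Q n (hset1 s) /\ S s.
  apply: contrapT => nQs; apply: QnG; exists n => L QL y Ly Sy.
  by apply: nQs; exists y; split => //; rewrite (_ : hset1 y = L) //; exact: hyperspace_eq.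
have [s sP] := choice Qs.
apply: (GK x erefl); apply: (Sseq s) => [n|]; first exact: (sP n).2.
exact: cvg_hset1_seq Qcvg (fun n => (sP n).1).
Qed.

Lemma seq_closure_diagonal (z : X) (b : nat -> X) (a : nat -> nat -> X) :
  b @ \oo --> z -> (forall j, b j <> z) -> (forall j, a j @ \oo --> b j) ->
  exists k : nat -> nat, (fun j => a j (k j)) @ \oo --> z.
Proof.
move=> b_cvg bz a_cvg.
pose Cs := [set z] `|` range b.
have cCs : compact Cs := compact_cvg_range b_cvg.
pose C : hyperspace X := exist _ Cs (conj (ex_intro Cs z (or_introl erefl)) cCs).
have Rprop j k : Cs `|` [set a j k] !=set0 /\ compact (Cs `|` [set a j k]).
  by split; [exists z; left; left | exact/compactU/compact_set1].
pose R j k : hyperspace X := exist _ _ (Rprop j k).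
have Cb j : Cs (b j) by right; exists j.
have R_ev j W : P C W -> \forall k \near \oo, W (R j k).
  apply: (@weak_base_cvg_adjoin X hX Cs (b j) (a j) C (R j) (a_cvg j) _ _
    (compact_closed hX cCs) (or_introl (Cb j)) P wbP) => //=.
  by apply/esym/setUidl => _ ->.
have [Q PQ Qcvg] := weak_base_cvg_seq wbP (@vietoris_openT X) (cntP C).
(* Each a j (k j) avoids the closures of the V i (i < j) that miss b j, so once
   it lies in a neighbourhood U `|` \bigcup_(i < I0) V i of C, it lies in U. *)
have [V VP] := choice (fun i => regular_nbhs_closure_avoid hX hR (bz i)).
have k_ex j : exists k, Q j (R j k) /\ forall i, i \in iota 0 j ->
    ~ closure (V i) (b j) -> ~ closure (V i) (a j k).
  apply: filter_ex (filterI (R_ev j _ (PQ j)) (filter_forall_seq _ _)) => i _.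
  have [bVi|nbVi] := pselect (closure (V i) (b j)).
    by apply: filterS filterT => k _ /(_ bVi).
  have oVc : open (~` closure (V i)) by exact/closed_openC/closed_closure.
  by apply: filterS (cvg_openP.1 (a_cvg j) _ oVc nbVi) => k ? _.
have [k kP] := choice k_ex; exists k.
apply/cvg_openP => U oU Uz; have [I0 _ bU] := cvg_openP.1 b_cvg U oU Uz.
pose Ow := U `|` \bigcup_(i in `I_I0) V i.
have oOw : open Ow by apply: openU => //; apply: bigcup_open => i _; case: (VP i).
have COw : inside Ow C.
  move=> _ [->|[i _ <-]]; first by left.
  case: (ltnP i I0) => iI0; last by left; exact: bU.
  by right; exists i => //; case: (VP i).
have b_far : \forall j \near \oo, forall i, i \in iota 0 I0 -> ~ closure (V i) (b j).
  apply: filter_forall_seq => i _; have [_ _ nclz] := VP i.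
  have oVc : open (~` closure (V i)) by exact/closed_openC/closed_closure.
  exact: cvg_openP.1 b_cvg _ oVc nclz.
apply: filterS (filterI (Qcvg _ (open_inside oOw) COw)
  (filterI b_far (nbhs_infty_ge I0))) => j [QjO [bjV I0j]].
case: (QjO _ (kP j).1 (a j (k j)) (or_intror erefl)) => [//|[i iI0 Vi]].
have iI : i \in iota 0 I0 by rewrite mem_iota.
have ij : i \in iota 0 j by rewrite mem_iota /=; exact: leq_trans iI0 I0j.
by case: ((kP j).2 i ij (bjV i iI) (subset_closure Vi)).
Qed.

Lemma seq_closure_closed (A : set X) : closed (seq_closure A).
Proof.
apply: weak_base_sequential => b z bA b_cvg.
have [[j <-]|bz] := pselect (exists j, b j = z); first exact: bA.
have a_ex j : exists a, (forall n, A (a n)) /\ a @ \oo --> b j.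
  by have [a ? ?] := bA j; exists a.
have [a aP] := choice a_ex.
have [k ak] : exists k : nat -> nat, (fun j => a j (k j)) @ \oo --> z.
  by apply: seq_closure_diagonal b_cvg _ (fun j => (aP j).2) => j bjz; apply: bz; exists j.
by exists (fun j => a j (k j)) => // j; exact: (aP j).1.
Qed.

Lemma closure_seq_closure (A : set X) : closure A `<=` seq_closure A.
Proof.
move=> x /(closureS (@subset_seq_closure X A)).
by rewrite -(closure_id _).1 //; exact: seq_closure_closed.
Qed.

Lemma nbhs_hset1_preimage y W : P (hset1 y) W -> nbhs y (hset1 @^-1` W).
Proof.
move=> PW; apply: contrapT => nW.
have : closure (~` (hset1 @^-1` W)) y.
  move=> B yB; apply: contrapT => nBW; apply: nW; apply: filterS yB => x Bx.
  by apply: contrapT => nWx; apply: nBW; exists x.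
move=> /closure_seq_closure [a aW a_cvg].
have [N _ aN] := weak_base_hset1_cvg a_cvg PW.
exact: aW N (aN N (leqnn N)).
Qed.

End WeakBaseHyperspace.

Lemma vietoris_weak_base_base (X : topologicalType) :
  hausdorff_space X -> regular_space X ->
  has_sigma_lc_weak_base (@vietoris_open X) -> has_sigma_lc_base (@open X).
Proof.
move=> hX hR [P [wbP slcP]].
have cntP K : countable (P K) := weak_base_countable wbP K slcP.
exists [set (hset1 @^-1` W)° | W in weak_base_family P]; split; last first.
  apply: (@sigma_locally_countable_image _ (@vietoris_open X) _ (@open X)
    (@hset1 X) (fun W => (hset1 @^-1` W)°)) slcP => [U|W].
    exact: open_hset1_preimage.
  exact: interior_subset.
split; first by move=> _ [W _ <-]; exact: open_interior.
move=> U x oU Ux.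
have xU : inside U (hset1 x) by move=> _ ->.
have [W [PW WU]] := wbP.2.2.1 _ _ (open_inside oU) xU.
exists (hset1 @^-1` W)°; split; first by exists W => //; exists (hset1 x).
split; first exact: (nbhs_hset1_preimage hX hR wbP cntP PW).
by move=> p /interior_subset /WU; apply.
Qed.

Lemma compact_finite_cover (X : topologicalType) (K : set X) (f : X -> set X) :
  compact K -> (forall x, K x -> nbhs x (f x)) ->
  exists2 t : seq X, (forall x, x \in t -> K x) &
    K `<=` \bigcup_(x in [set x | x \in t]) f x.
Proof.
move=> /compact_near_coveringP cK fnbhs.
pose F := filter_from [set: seq X] (fun t0 => [set t : seq X | {subset t0 <= t}]).
have FF : Filter F.
  apply: filter_from_filter; first by exists [::].
  move=> t0 t1 _ _; exists (t0 ++ t1) => // t t01.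
  by split => y yt; apply: t01; rewrite mem_cat yt ?orbT.
have [|t0 _ t0P] := cK (seq X) F (fun t y => exists2 x, x \in t & K x /\ f x y) FF.
  move=> x Kx; exists (f x, [set t : seq X | {subset [:: x] <= t}]).
    by split; [exact: fnbhs | exists [:: x]].
  by move=> [y t] /= [fxy xt]; exists x; [apply: xt; exact: mem_head | split].
exists [seq x <- t0 | `[< K x >]] => [x|y Ky].
  by rewrite mem_filter => /andP [/asboolP].
have [x xt [Kx fxy]] := t0P t0 (fun y h => h) y Ky.
by exists x => //=; rewrite mem_filter xt andbT; apply/asboolP.
Qed.

Section VietorisFamily.
Variable X : topologicalType.

Definition vietoris_family (F : set (set X)) : set (set (hyperspace X)) :=
  [set vietoris_basic s | s in [set s : seq (set X) | forall U, U \in s -> F U]].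

Lemma vietoris_basicS (s u : seq (set X)) :
  (forall U, U \in u -> exists2 V, V \in s & U `<=` V) ->
  (forall V, V \in s -> exists2 U, U \in u & U `<=` V) ->
  vietoris_basic u `<=` vietoris_basic s.
Proof.
move=> us su L [Lu Lm]; split.
  by move=> x /Lu [U /us [V Vs UV] Ux]; exists V => //; exact: UV.
by move=> V /su [U /Lm [x [Lx Ux]] UV]; exists x; split => //; exact: UV.
Qed.

Lemma vietoris_family_base (B : set (set X)) :
  is_base (@open X) B -> is_base (@vietoris_open X) (vietoris_family B).
Proof.
move=> [oB Bnbhs]; split.
  by move=> _ [s sB <-]; apply: vietoris_basic_open => U /sB /oB.
move=> A K oA AK; have [s [os [[Ks Km] sA]]] := oA K AK.
have g_ex x : exists U, proj1_sig K x ->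
    [/\ B U, U x & exists2 V, V \in s & U `<=` V].
  have [Kx|nKx] := pselect (proj1_sig K x); last by exists set0 => /nKx.
  have [V Vs Vx] := Ks x Kx; have [U [BU [Ux UV]]] := Bnbhs V x (os V Vs) Vx.
  by exists U => _; split => //; exists V.
have [g gP] := choice g_ex.
have g_nbhs x : proj1_sig K x -> nbhs x (g x).
  by move=> /gP [BU Ux _]; apply: open_nbhs_nbhs; split => //; exact: oB.
have [t tK Kt] := compact_finite_cover (proj2_sig K).2 g_nbhs.
have h_ex V : exists U, V \in s -> [/\ B U, proj1_sig K `&` U !=set0 & U `<=` V].
  have [Vs|_] := boolP (V \in s); last by exists set0.
  have [x [Kx Vx]] := Km V Vs; have [U [BU [Ux UV]]] := Bnbhs V x (os V Vs) Vx.
  by exists U => _; split => //; exists x.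
have [h hP] := choice h_ex.
pose u := [seq g x | x <- t] ++ [seq h V | V <- s].
have uP U : U \in u ->
    [/\ B U, exists2 V, V \in s & U `<=` V & proj1_sig K `&` U !=set0].
  rewrite mem_cat => /orP [/mapP [x xt ->]|/mapP [V Vs ->]].
    by have [BU Ux UV] := gP x (tK x xt); split => //; exists x; split => //; exact: tK.
  by have [BU KU UV] := hP V Vs; split => //; exists V.
exists (vietoris_basic u); split; first by exists u => // U /uP [].
split; last first.
  apply: subset_trans sA; apply: vietoris_basicS => [U /uP [] //|V Vs].
  by exists (h V); [rewrite mem_cat map_f ?orbT | have [] := hP V Vs].
split; last by move=> U /uP [].
move=> y /Kt [x xt gxy]; exists (g x) => //=.
by rewrite mem_cat map_f.
Qed.

Lemma compact_locally_countable (F : set (set X)) (K : set X) :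
  locally_countable (@open X) F -> compact K ->
  exists2 V, open V & K `<=` V /\ countable [set U | F U /\ U `&` V !=set0].
Proof.
move=> lcF cK; have [N NP] := choice lcF.
have N_nbhs x : K x -> nbhs x (N x).
  by move=> _; apply: open_nbhs_nbhs; split; [exact: (NP x).1 | exact: (NP x).2.1].
have [t _ Kt] := compact_finite_cover cK N_nbhs.
exists (\bigcup_(x in [set x | x \in t]) N x).
  by apply: bigcup_open => x _; exact: (NP x).1.
split => //; apply: (@sub_countable _ _ _
  (\bigcup_(x in [set x | x \in t]) [set U | F U /\ U `&` N x !=set0])).
  apply: subset_card_le => U [FU [y [Uy [x tx Nxy]]]].
  by exists x => //; split => //; exists y.
apply: bigcup_countable; first exact/finite_set_countable/finite_seq.
by move=> x _; exact: (NP x).2.2.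
Qed.

Lemma vietoris_family_locally_countable (F : set (set X)) :
  locally_countable (@open X) F ->
  locally_countable (@vietoris_open X) (vietoris_family F).
Proof.
move=> lcF K; have [V oV [KV cV]] := compact_locally_countable lcF (proj2_sig K).2.
exists (inside V); split; first exact: open_inside.
split => //.
pose vb (AA : set (set X)) : set (hyperspace X) :=
  [set L | proj1_sig L `<=` \bigcup_(U in AA) U /\
           forall U, AA U -> proj1_sig L `&` U !=set0].
have cvb := sub_countable (card_image_le vb _) (countable_finite_subset cV).
apply: sub_countable cvb; apply: subset_card_le => _ [[s sF <-] [L [Ls LV]]].
exists [set U | U \in s] => //; split; last exact: finite_seq.
move=> U Us; split; first exact: sF.
by have [y [Ly Uy]] := Ls.2 U Us; exists y; split => //; exact: LV.
Qed.

End VietorisFamily.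

Lemma sigma_lc_base_vietoris (X : topologicalType) :
  has_sigma_lc_base (@open X) -> has_sigma_lc_base (@vietoris_open X).
Proof.
move=> [B [Bbase [G [lcG BG]]]].
exists (vietoris_family B); split; first exact: vietoris_family_base.
pose layer n := [set U | exists2 m, (m <= n)%N & G m U].
exists (fun n => vietoris_family (layer n)); split.
  move=> n; apply: vietoris_family_locally_countable.
  exact: locally_countable_layers (@openI X) lcG n.
apply/seteqP; split => [_ [s sB <-]|_ [n _ [s sn <-]]]; last first.
  by exists s => // U /sn [m _ GmU]; rewrite BG; exists m.
have [n sn] : exists n, forall U, U \in s -> layer n U.
  elim: s sB => [|V s IHs] sB; first by exists 0 => U; rewrite in_nil.
  have [n sn] : exists n, forall U, U \in s -> layer n U.
    by apply: IHs => U Us; apply: sB; rewrite inE Us orbT.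
  have := sB V (mem_head V s); rewrite BG => -[m _ GmV].
  exists (maxn m n) => U; rewrite inE => /orP [/eqP ->|/sn [m' m'n GU]].
    by exists m; rewrite ?leq_maxl.
  by exists m'; rewrite ?(leq_trans m'n (leq_maxr _ _)).
by exists n => //; exists s.
Qed.

Lemma vietoris_base_weak_base (X : topologicalType) :
  has_sigma_lc_base (@vietoris_open X) -> has_sigma_lc_weak_base (@vietoris_open X).
Proof.
move=> [B [Bbase slcB]]; exists (fun K => [set W | B W /\ W K]); split.
  apply: base_weak_base Bbase; first exact: vietoris_openI.
  exact: vietoris_open_local.
by apply: sigma_locally_countableS slcB => W [K []].
Qed.

Theorem theorem3p12 (X : topologicalType) :
  hausdorff_space X -> regular_space X ->
  (has_sigma_lc_base (@open X) <-> has_sigma_lc_weak_base (@vietoris_open X)) /\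
  (has_sigma_lc_weak_base (@vietoris_open X) <-> has_sigma_lc_base (@vietoris_open X)).
Proof.
move=> hX hR; have two_one := vietoris_weak_base_base hX hR.
split; split => h.
- exact/vietoris_base_weak_base/sigma_lc_base_vietoris.
- exact: two_one.
- exact/sigma_lc_base_vietoris/two_one.
- exact: vietoris_base_weak_base.
Qed.
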